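(* Let $\lambda>0$ and let $(g,X)$ satisfy $\mathrm{Ric}(g)=\tfrac12X^\flat\otimes X^\flat-\tfrac12\mathcal{L}_Xg+\lambda g$ with $g=\frac{3}{\lambda}(\mathrm{d}\theta^2+\sin^2\theta\,\mathrm{d}\phi^2)$ the round metric on (an open subset of) $S^2$ and $X^\flat=-2\,\mathrm{d}F/F$ for a nonvanishing function $F(\theta,\phi)$. Then, after a rotation of $\phi$, $F=a\sin\phi\sin\theta+b\cos\theta$ for constants $a,b$; in particular $X$ cannot extend smoothly to all of $S^2$.
   Context: $(\theta,\phi)$ are standard spherical coordinates. *)

From Stdlib Require Import Reals.
From Coquelicot Require Import Coquelicot.
Open Scope R_scope.

(* Points of the (theta, phi) coordinate plane: p = (theta, phi). *)
Definition pt := (R * R)%type.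

Definition sum2 (f : nat -> R) : R := f 0%nat + f 1%nat.

(* Partial derivative with respect to coordinate i (0 = theta, 1 = phi). *)
Definition pd (i : nat) (f : pt -> R) (p : pt) : R :=
  match i with
  | 0%nat => Derive (fun t => f (t, snd p)) (fst p)
  | _ => Derive (fun t => f (fst p, t)) (snd p)
  end.

Definition ex_pd (i : nat) (f : pt -> R) (p : pt) : Prop :=
  match i with
  | 0%nat => ex_derive (fun t => f (t, snd p)) (fst p)
  | _ => ex_derive (fun t => f (fst p, t)) (snd p)
  end.

Fixpoint pds (l : list nat) (f : pt -> R) : pt -> R :=
  match l with
  | nil => f
  | cons i l' => pd i (pds l' f)
  end.

Definition smooth_on (U : pt -> Prop) (f : pt -> R) : Prop :=
  forall (l : list nat) (p : pt), U p ->
    (forall i, List.In i l -> (i <= 1)%nat) ->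
    continuous (pds l f) p /\ ex_pd 0 (pds l f) p /\ ex_pd 1 (pds l f) p.

Definition connected_set (U : pt -> Prop) : Prop :=
  forall A B : pt -> Prop, open A -> open B ->
    (forall p, U p -> A p \/ B p) ->
    (exists p, U p /\ A p) -> (exists p, U p /\ B p) ->
    exists p, U p /\ A p /\ B p.

Definition metric2 := nat -> nat -> pt -> R.

Definition mdet (g : metric2) (p : pt) : R :=
  g 0%nat 0%nat p * g 1%nat 1%nat p - g 0%nat 1%nat p * g 1%nat 0%nat p.

Definition ginv (g : metric2) (i j : nat) (p : pt) : R :=
  match i, j with
  | 0%nat, 0%nat => g 1%nat 1%nat p / mdet g p
  | 0%nat, _ => - g 0%nat 1%nat p / mdet g p
  | _, 0%nat => - g 1%nat 0%nat p / mdet g p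
  | _, _ => g 0%nat 0%nat p / mdet g p
  end.

Definition christoffel (g : metric2) (k i j : nat) (p : pt) : R :=
  / 2 * sum2 (fun l => ginv g k l p *
     (pd i (g j l) p + pd j (g i l) p - pd l (g i j) p)).

Definition ricci (g : metric2) (i j : nat) (p : pt) : R :=
  sum2 (fun k => pd k (christoffel g k i j) p)
  - sum2 (fun k => pd j (christoffel g k i k) p)
  + sum2 (fun k => sum2 (fun l =>
       christoffel g k k l p * christoffel g l i j p
     - christoffel g k j l p * christoffel g l i k p)).

Definition vfield2 := nat -> pt -> R.

Definition flat (g : metric2) (X : vfield2) (i : nat) (p : pt) : R :=
  sum2 (fun j => g i j p * X j p).

Definition lie_metric (g : metric2) (X : vfield2) (i j : nat) (p : pt) : R :=
  sum2 (fun k => X k p * pd k (g i j) p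
                 + g k j p * pd i (X k) p
                 + g i k p * pd j (X k) p).

Definition round_metric (lam : R) : metric2 :=
  fun i j p =>
    match i, j with
    | 0%nat, 0%nat => 3 / lam
    | 1%nat, 1%nat => 3 / lam * (sin (fst p))^2
    | _, _ => 0
    end.

From Stdlib Require Import Reals Lra Lia FunctionalExtensionality Classical.
From Coquelicot Require Import Coquelicot.
Open Scope R_scope.

(* Since g
   is Einstein, Ric = (lam/3) g, and since X^flat is exact, the soliton equation
   Ric = 1/2 X^flat (x) X^flat - 1/2 L_X g + lam g collapses to the Hessian
   equation  Hess F = -F g_1  for the unit round metric g_1, i.e. to the three
   coordinate equations collected in [sphere_hessian].

   Its solutions are the restrictions to the sphere of linear functions of R^3:
   for every solution h (in particular for the three coordinate functions
   [sphere_linear]), the "pairing" <F, h> = F h + g_1^{-1}(dF, dh) has vanishing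
   partial derivatives, hence is constant on the connected set U, and F is
   recovered from its three pairings with the coordinate functions.  Writing
   the resulting a sin theta cos phi + b sin theta sin phi + c cos theta in
   polar form gives the claimed shape of F, and such an F vanishes somewhere on
   the equator, so U cannot be the whole coordinate strip. *)

(* Curvature of the round metric. *)

Lemma round_metric_pd (lam : R) (i j k : nat) (p : pt) :
  pd i (round_metric lam j k) p =
  if ((i =? 0) && (j =? 1) && (k =? 1))%nat%bool
  then 2 * (3 / lam) * sin (fst p) * cos (fst p) else 0.
Proof.
  destruct i as [|i], j as [|[|j]], k as [|[|k]]; unfold pd, round_metric; simpl;
    try apply Derive_const.
  apply is_derive_unique; auto_derive; auto; ring.
Qed.

Definition round_christoffel (k i j : nat) (t : R) : R :=
  match k, i, j with
  | 0%nat, 1%nat, 1%nat => - (sin t * cos t)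
  | 1%nat, 0%nat, 1%nat | 1%nat, 1%nat, 0%nat => cos t / sin t
  | _, _, _ => 0
  end.

(* Coq's convention x / 0 = 0 makes the identity hold even where sin theta = 0,
   which lets us rewrite under the derivatives taken in the Ricci tensor. *)
Lemma christoffel_round (lam : R) (k i j : nat) :
  0 < lam -> (k <= 1)%nat -> (i <= 1)%nat -> (j <= 1)%nat ->
  christoffel (round_metric lam) k i j = fun q => round_christoffel k i j (fst q).
Proof.
  intros Hlam Hk Hi Hj; extensionality p.
  unfold christoffel, sum2, ginv, mdet; rewrite !round_metric_pd.
  destruct (Req_dec (sin (fst p)) 0) as [Hs | Hs];
    destruct k as [|[|k]], i as [|[|i]], j as [|[|j]]; try lia;
    unfold round_metric, round_christoffel; simpl.
  all: try (field; lra).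
  all: rewrite Hs; unfold Rdiv; rewrite ?Rmult_0_l, ?Rmult_0_r, ?Rminus_0_r, ?Rinv_0; ring.
Qed.

Lemma ricci_round (lam : R) (i j : nat) (p : pt) :
  0 < lam -> sin (fst p) <> 0 -> (i <= 1)%nat -> (j <= 1)%nat ->
  ricci (round_metric lam) i j p = lam / 3 * round_metric lam i j p.
Proof.
  intros Hlam Hs Hi Hj.
  assert (Hcot : Derive (fun t => cos t / sin t) (fst p) = - / sin (fst p) ^ 2).
  { apply is_derive_unique; auto_derive; auto.
    transitivity (- (Rsqr (sin (fst p)) + Rsqr (cos (fst p))) / sin (fst p) ^ 2).
    - unfold Rsqr; field; auto.
    - rewrite sin2_cos2; field; auto. }
  assert (Hsc : Derive (fun t => - (sin t * cos t)) (fst p) = sin (fst p) ^ 2 - cos (fst p) ^ 2).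
  { apply is_derive_unique; auto_derive; auto; ring. }
  unfold ricci, sum2; rewrite !christoffel_round by (assumption || lia).
  destruct i as [|[|i]], j as [|[|j]]; try lia;
    unfold pd, round_christoffel, round_metric; simpl;
    rewrite ?Derive_const, ?Hcot, ?Hsc.
  all: try (field; lra).
  pose proof (sin2_cos2 (fst p)) as Hpyth; unfold Rsqr in Hpyth.
  transitivity ((sin (fst p) * sin (fst p) + cos (fst p) * cos (fst p)
                 - cos (fst p) * cos (fst p)) / sin (fst p) ^ 2).
  - rewrite Hpyth; field; auto.
  - field; split; lra.
Qed.

Lemma pd_scal (i : nat) (c : R) (f : pt -> R) (p : pt) :
  pd i (fun q => c * f q) p = c * pd i f p.
Proof. destruct i; apply Derive_scal. Qed.

Lemma ex_pd_scal (i : nat) (c : R) (f : pt -> R) (p : pt) :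
  ex_pd i f p -> ex_pd i (fun q => c * f q) p.
Proof. destruct i; apply ex_derive_scal. Qed.

Lemma pd_mult (i : nat) (f g : pt -> R) (p : pt) :
  ex_pd i f p -> ex_pd i g p ->
  pd i (fun q => f q * g q) p = pd i f p * g p + f p * pd i g p.
Proof. destruct p, i; apply Derive_mult. Qed.

Lemma ex_pd_mult (i : nat) (f g : pt -> R) (p : pt) :
  ex_pd i f p -> ex_pd i g p -> ex_pd i (fun q => f q * g q) p.
Proof. destruct p, i; apply ex_derive_mult. Qed.

Lemma pd_div (i : nat) (f g : pt -> R) (p : pt) :
  ex_pd i f p -> ex_pd i g p -> g p <> 0 ->
  pd i (fun q => f q / g q) p = (pd i f p * g p - f p * pd i g p) / g p ^ 2.
Proof. destruct p, i; apply Derive_div. Qed.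

Lemma pd_sin2 (p : pt) :
  pd 0 (fun q => sin (fst q) ^ 2) p = 2 * sin (fst p) * cos (fst p) /\
  pd 1 (fun q => sin (fst q) ^ 2) p = 0 /\
  ex_pd 0 (fun q => sin (fst q) ^ 2) p /\ ex_pd 1 (fun q => sin (fst q) ^ 2) p.
Proof.
  destruct p as [x y]; unfold pd, ex_pd; simpl.
  repeat split; [apply is_derive_unique | apply Derive_const | |]; auto_derive; auto; ring.
Qed.

Lemma open_slice0 (U : pt -> Prop) (p : pt) :
  open U -> U p -> locally (fst p) (fun t => U (t, snd p)).
Proof.
  intros HU Hp; destruct p as [x y].
  apply (locally_2d_1d_const_y (fun u v => U (u, v))), locally_2d_locally.
  apply HU in Hp; eapply filter_imp; [|exact Hp]; intros [u v]; auto.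
Qed.

Lemma open_slice1 (U : pt -> Prop) (p : pt) :
  open U -> U p -> locally (snd p) (fun t => U (fst p, t)).
Proof.
  intros HU Hp; destruct p as [x y].
  apply (locally_2d_1d_const_x (fun u v => U (u, v))), locally_2d_locally.
  apply HU in Hp; eapply filter_imp; [|exact Hp]; intros [u v]; auto.
Qed.

Lemma pd_ext_open (U : pt -> Prop) (i : nat) (f g : pt -> R) (p : pt) :
  open U -> U p -> (forall q, U q -> f q = g q) -> pd i f p = pd i g p.
Proof.
  intros HU Hp Hfg; destruct i; apply Derive_ext_loc.
  - eapply filter_imp; [|apply (open_slice0 U p HU Hp)]; auto.
  - eapply filter_imp; [|apply (open_slice1 U p HU Hp)]; auto.
Qed.

Definition ex_pd2 (f : pt -> R) (p : pt) : Prop :=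
  forall i j, (i <= 1)%nat -> (j <= 1)%nat -> ex_pd j f p /\ ex_pd j (pd i f) p.

Lemma smooth_ex_pd2 (U : pt -> Prop) (f : pt -> R) (p : pt) :
  smooth_on U f -> U p -> ex_pd2 f p.
Proof.
  intros Hf Hp i j Hi Hj; split.
  - destruct (Hf nil p Hp) as [_ [H0 H1]]; [simpl; tauto|].
    destruct j as [|j]; assumption.
  - destruct (Hf (i :: nil)%list p Hp) as [_ [H0 H1]]; [simpl; intros k [<-|[]]; exact Hi|].
    destruct j as [|j]; assumption.
Qed.

Lemma smooth_pd_comm (U : pt -> Prop) (f : pt -> R) (p : pt) :
  open U -> smooth_on U f -> U p -> pd 0 (pd 1 f) p = pd 1 (pd 0 f) p.
Proof.
  intros HU Hf Hp; destruct p as [x y].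
  assert (Hcont : forall i j, (i <= 1)%nat -> (j <= 1)%nat ->
    continuity_2d_pt (fun u v => pd i (pd j f) (u, v)) x y).
  { intros i j Hi Hj; apply continuity_2d_pt_filterlim.
    destruct (Hf (i :: j :: nil)%list (x, y) Hp) as [C _];
      [simpl; intros k [<-|[<-|[]]]; assumption|].
    eapply filterlim_ext; [|exact C]; intros [u v]; reflexivity. }
  apply (Schwarz (fun u v => f (u, v)) x y).
  - apply locally_2d_locally; apply HU in Hp.
    eapply filter_imp; [|exact Hp]; intros [u v] Huv.
    destruct (smooth_ex_pd2 U f (u, v) Hf Huv 0%nat 0%nat) as [E0 _]; try lia.
    destruct (smooth_ex_pd2 U f (u, v) Hf Huv 1%nat 1%nat) as [E1 _]; try lia.
    destruct (smooth_ex_pd2 U f (u, v) Hf Huv 1%nat 0%nat) as [_ E0_1]; try lia.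
    destruct (smooth_ex_pd2 U f (u, v) Hf Huv 0%nat 1%nat) as [_ E1_0]; try lia.
    repeat split; assumption.
  - exact (Hcont 0%nat 1%nat ltac:(lia) ltac:(lia)).
  - exact (Hcont 1%nat 0%nat ltac:(lia) ltac:(lia)).
Qed.

(* The Hessian equation Hess f = -f g_1 of the unit round metric, in coordinates:
   d_i d_j f - Gamma^k_ij d_k f = -f (g_1)_ij. *)
Definition sphere_hessian (f : pt -> R) (p : pt) : Prop :=
  pd 0 (pd 0 f) p = - f p /\
  pd 1 (pd 0 f) p = cos (fst p) / sin (fst p) * pd 1 f p /\
  pd 0 (pd 1 f) p = cos (fst p) / sin (fst p) * pd 1 f p /\
  pd 1 (pd 1 f) p = - (sin (fst p) * cos (fst p) * pd 0 f p) - sin (fst p) ^ 2 * f p.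

(* Reduction of the soliton equation to the Hessian equation. *)

Lemma eq_from_residual (L R' a b k : R) : L = R' -> a - b = k * (R' - L) -> a = b.
Proof. intros -> H; rewrite Rminus_diag, Rmult_0_r in H; lra. Qed.

Section GradientSoliton.

Variables (lam : R) (U : pt -> Prop) (X : vfield2) (F : pt -> R).
Hypotheses (Hlam : 0 < lam) (HU : open U)
  (Hth : forall p, U p -> 0 < fst p < PI)
  (HF : smooth_on U F) (HF0 : forall p, U p -> F p <> 0)
  (Hflat : forall i p, (i <= 1)%nat -> U p ->
     flat (round_metric lam) X i p = -2 * pd i F p / F p)
  (Hric : forall i j p, (i <= 1)%nat -> (j <= 1)%nat -> U p ->
     ricci (round_metric lam) i j p =
       / 2 * (flat (round_metric lam) X i p * flat (round_metric lam) X j p)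
       - / 2 * lie_metric (round_metric lam) X i j p
       + lam * round_metric lam i j p).

(* X^flat = -2 dF/F with g = (3/lam) g_1 gives X = c grad_{g_1} F / F. *)
Let c := - 2 * lam / 3.

Lemma sin_pos_on (p : pt) : U p -> 0 < sin (fst p).
Proof. intros Hp; apply sin_gt_0; apply Hth; exact Hp. Qed.

Lemma soliton_field (q : pt) : U q ->
  X 0%nat q = c * pd 0 F q / F q /\
  X 1%nat q = c * pd 1 F q / (sin (fst q) ^ 2 * F q).
Proof.
  intros Hq; pose proof (sin_pos_on q Hq) as Hs; pose proof (HF0 q Hq) as HFq.
  pose proof (Hflat 0%nat q ltac:(lia) Hq) as E0; pose proof (Hflat 1%nat q ltac:(lia) Hq) as E1.
  unfold flat, sum2, round_metric in E0, E1; cbv beta iota in E0, E1.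
  unfold c; split.
  - apply (Rmult_eq_reg_l (3 / lam)); [| apply Rgt_not_eq, Rdiv_lt_0_compat; lra].
    rewrite Rmult_0_l, Rplus_0_r in E0; rewrite E0; field; lra.
  - apply (Rmult_eq_reg_l (3 / lam * sin (fst q) ^ 2)).
    + rewrite Rmult_0_l, Rplus_0_l in E1; rewrite E1; field; lra.
    + apply Rgt_not_eq, Rmult_lt_0_compat; [apply Rdiv_lt_0_compat; lra | apply pow_lt; lra].
Qed.

Lemma soliton_field_pd (j : nat) (p : pt) : (j <= 1)%nat -> U p ->
  pd j (X 0%nat) p = c * (pd j (pd 0 F) p * F p - pd 0 F p * pd j F p) / F p ^ 2 /\
  pd j (X 1%nat) p =
    c * (pd j (pd 1 F) p * (sin (fst p) ^ 2 * F p)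
         - pd 1 F p * (pd j (fun q => sin (fst q) ^ 2) p * F p + sin (fst p) ^ 2 * pd j F p))
      / (sin (fst p) ^ 2 * F p) ^ 2.
Proof.
  intros Hj Hp; pose proof (sin_pos_on p Hp) as Hs; pose proof (HF0 p Hp) as HFp.
  destruct (smooth_ex_pd2 U F p HF Hp 0%nat j ltac:(lia) Hj) as [Fj F0j].
  destruct (smooth_ex_pd2 U F p HF Hp 1%nat j ltac:(lia) Hj) as [_ F1j].
  assert (Hsin2 : ex_pd j (fun q => sin (fst q) ^ 2) p)
    by (destruct (pd_sin2 p) as [_ [_ [E0 E1]]]; destruct j; assumption).
  split.
  - rewrite (pd_ext_open U j (X 0%nat) (fun q => c * pd 0 F q / F q))
      by (assumption || (intros q Hq; apply soliton_field; exact Hq)).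
    rewrite pd_div, pd_scal; [unfold Rdiv; ring | apply ex_pd_scal | |]; assumption.
  - rewrite (pd_ext_open U j (X 1%nat) (fun q => c * pd 1 F q / (sin (fst q) ^ 2 * F q)))
      by (assumption || (intros q Hq; apply soliton_field; exact Hq)).
    rewrite pd_div, pd_scal, pd_mult; [unfold Rdiv; ring | | | apply ex_pd_scal | apply ex_pd_mult |];
      try assumption.
    apply Rmult_integral_contrapositive; split; [apply pow_nonzero|]; lra.
Qed.

(* The (0,0), (0,1), (1,1) components of the soliton equation are, after
   multiplication by F/2, the three equations of the Hessian system. *)
Lemma soliton_hessian (p : pt) : U p -> sphere_hessian F p.
Proof.
  intros Hp; pose proof (sin_pos_on p Hp) as Hs; pose proof (HF0 p Hp) as HFp.
  destruct (soliton_field p Hp) as [X0 X1].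
  destruct (soliton_field_pd 0%nat p ltac:(lia) Hp) as [DX00 DX01].
  destruct (soliton_field_pd 1%nat p ltac:(lia) Hp) as [DX10 DX11].
  destruct (pd_sin2 p) as [S0 [S1 _]].
  assert (Hsoliton : forall i j, (i <= 1)%nat -> (j <= 1)%nat ->
    lam / 3 * round_metric lam i j p =
      / 2 * (-2 * pd i F p / F p * (-2 * pd j F p / F p))
      - / 2 * lie_metric (round_metric lam) X i j p + lam * round_metric lam i j p).
  { intros i j Hi Hj; rewrite <- (Hflat i p), <- (Hflat j p), <- ricci_round by (lra || auto).
    apply Hric; assumption. }
  pose proof (Hsoliton 0%nat 0%nat ltac:(lia) ltac:(lia)) as E00.
  pose proof (Hsoliton 0%nat 1%nat ltac:(lia) ltac:(lia)) as E01.
  pose proof (Hsoliton 1%nat 1%nat ltac:(lia) ltac:(lia)) as E11.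
  unfold lie_metric, sum2 in E00, E01, E11; rewrite !round_metric_pd in E00, E01, E11.
  rewrite X0, X1, DX00, DX01, DX10, DX11, S0, S1 in *.
  unfold round_metric, c in E00, E01, E11; cbn [Nat.eqb andb] in E00, E01, E11.
  pose proof (smooth_pd_comm U F p HU HF Hp) as Hsym.
  unfold sphere_hessian.
  set (s := sin (fst p)) in *; set (co := cos (fst p)) in *.
  set (F0 := pd 0 F p) in *; set (F1 := pd 1 F p) in *.
  set (F00 := pd 0 (pd 0 F) p) in *; set (F10 := pd 1 (pd 0 F) p) in *.
  set (F01 := pd 0 (pd 1 F) p) in *; set (F11 := pd 1 (pd 1 F) p) in *.
  set (Fp := F p) in *.
  rewrite Hsym in E01 |- *.
  assert (Hne : lam <> 0 /\ Fp <> 0 /\ s <> 0) by (repeat split; lra).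
  repeat split.
  - apply (eq_from_residual _ _ _ _ (Fp / 2) E00); field; tauto.
  - apply (eq_from_residual _ _ _ _ (Fp / 2) E01); field; tauto.
  - apply (eq_from_residual _ _ _ _ (Fp / 2) E01); field; tauto.
  - apply (eq_from_residual _ _ _ _ (Fp / 2) E11); field; tauto.
Qed.

End GradientSoliton.

(* Linear functions of R^3 restricted to the sphere, and the pairing. *)

(* a x + b y + c z in spherical coordinates. *)
Definition sphere_linear (a b c : R) (q : pt) : R :=
  sin (fst q) * (a * cos (snd q) + b * sin (snd q)) + c * cos (fst q).

Lemma pd0_sphere_linear (a b c : R) :
  pd 0 (sphere_linear a b c) =
  fun q => cos (fst q) * (a * cos (snd q) + b * sin (snd q)) - c * sin (fst q).
Proof.
  extensionality q; apply is_derive_unique; unfold sphere_linear; simpl.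
  auto_derive; auto; ring.
Qed.

Lemma pd1_sphere_linear (a b c : R) :
  pd 1 (sphere_linear a b c) =
  fun q => sin (fst q) * (b * cos (snd q) - a * sin (snd q)).
Proof.
  extensionality q; apply is_derive_unique; unfold sphere_linear; simpl.
  auto_derive; auto; ring.
Qed.

Lemma sphere_linear_hessian (a b c : R) (p : pt) :
  sin (fst p) <> 0 -> sphere_hessian (sphere_linear a b c) p.
Proof.
  intros Hs; unfold sphere_hessian; rewrite pd0_sphere_linear, pd1_sphere_linear.
  unfold sphere_linear.
  destruct p as [x y]; simpl in *.
  repeat split; unfold pd; apply is_derive_unique; simpl; auto_derive; auto.
  all: try (field; assumption).
  transitivity (- (sin x * (Rsqr (sin x) + Rsqr (cos x)) * (a * cos y + b * sin y))).
  - rewrite sin2_cos2; ring.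
  - unfold Rsqr; ring.
Qed.

Lemma sphere_linear_ex_pd2 (a b c : R) (p : pt) : ex_pd2 (sphere_linear a b c) p.
Proof.
  intros i j Hi Hj; destruct p as [x y].
  destruct i as [|[|i]]; try lia; [rewrite pd0_sphere_linear | rewrite pd1_sphere_linear];
    unfold sphere_linear; destruct j; simpl; split; auto_derive; auto.
Qed.

Definition sphere_pairing (f h : pt -> R) (q : pt) : R :=
  f q * h q + pd 0 f q * pd 0 h q + pd 1 f q * pd 1 h q / sin (fst q) ^ 2.

(* Product rule for the pairing along one coordinate line; w is the weight of
   the d_phi d_phi term. *)
Lemma is_derive_pairing_slice (a a0 a1 b b0 b1 w : R -> R) (x da da0 da1 db db0 db1 dw l : R) :
  is_derive a x da -> is_derive a0 x da0 -> is_derive a1 x da1 ->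
  is_derive b x db -> is_derive b0 x db0 -> is_derive b1 x db1 -> is_derive w x dw ->
  l = da * b x + a x * db + (da0 * b0 x + a0 x * db0)
      + (da1 * b1 x * w x + a1 x * db1 * w x + a1 x * b1 x * dw) ->
  is_derive (fun t => a t * b t + a0 t * b0 t + a1 t * b1 t * w t) x l.
Proof.
  intros Ha Ha0 Ha1 Hb Hb0 Hb1 Hw ->.
  rewrite <- (is_derive_unique _ _ _ Ha), <- (is_derive_unique _ _ _ Ha0),
    <- (is_derive_unique _ _ _ Ha1), <- (is_derive_unique _ _ _ Hb),
    <- (is_derive_unique _ _ _ Hb0), <- (is_derive_unique _ _ _ Hb1),
    <- (is_derive_unique _ _ _ Hw).
  auto_derive; [repeat split; eexists; eassumption |].
  change (fun t => ?g t) with g; ring.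
Qed.

Lemma sphere_pairing_stationary (f h : pt -> R) (x y : R) :
  sin x <> 0 -> ex_pd2 f (x, y) -> ex_pd2 h (x, y) ->
  sphere_hessian f (x, y) -> sphere_hessian h (x, y) ->
  is_derive (fun t => sphere_pairing f h (t, y)) x 0 /\
  is_derive (fun t => sphere_pairing f h (x, t)) y 0.
Proof.
  intros Hs Hf Hh [Ef00 [Ef10 [Ef01 Ef11]]] [Eh00 [Eh10 [Eh01 Eh11]]]; cbn [fst snd] in *.
  destruct (Hf 0%nat 0%nat) as [f0 f00]; try lia.
  destruct (Hf 1%nat 1%nat) as [f1 f11]; try lia.
  destruct (Hf 0%nat 1%nat) as [_ f01]; try lia.
  destruct (Hf 1%nat 0%nat) as [_ f10]; try lia.
  destruct (Hh 0%nat 0%nat) as [h0 h00]; try lia.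
  destruct (Hh 1%nat 1%nat) as [h1 h11]; try lia.
  destruct (Hh 0%nat 1%nat) as [_ h01]; try lia.
  destruct (Hh 1%nat 0%nat) as [_ h10]; try lia.
  split.
  - apply (is_derive_pairing_slice
      (fun t => f (t, y)) (fun t => pd 0 f (t, y)) (fun t => pd 1 f (t, y))
      (fun t => h (t, y)) (fun t => pd 0 h (t, y)) (fun t => pd 1 h (t, y))
      (fun t => / sin t ^ 2) x
      (pd 0 f (x, y)) (pd 0 (pd 0 f) (x, y)) (pd 0 (pd 1 f) (x, y))
      (pd 0 h (x, y)) (pd 0 (pd 0 h) (x, y)) (pd 0 (pd 1 h) (x, y))
      (- 2 * cos x / sin x ^ 3));
      try (apply Derive_correct; assumption).
    + auto_derive; [auto | field; auto].
    + rewrite Ef00, Ef01, Eh00, Eh01; field; auto.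
  - apply (is_derive_pairing_slice
      (fun t => f (x, t)) (fun t => pd 0 f (x, t)) (fun t => pd 1 f (x, t))
      (fun t => h (x, t)) (fun t => pd 0 h (x, t)) (fun t => pd 1 h (x, t))
      (fun _ => / sin x ^ 2) y
      (pd 1 f (x, y)) (pd 1 (pd 0 f) (x, y)) (pd 1 (pd 1 f) (x, y))
      (pd 1 h (x, y)) (pd 1 (pd 0 h) (x, y)) (pd 1 (pd 1 h) (x, y)) 0);
      try (apply Derive_correct; assumption).
    + auto_derive; auto.
    + rewrite Ef10, Ef11, Eh10, Eh11; field; auto.
Qed.

Lemma sphere_linear_reconstruction (f : pt -> R) (q : pt) :
  sin (fst q) <> 0 ->
  f q = sphere_linear (sphere_pairing f (sphere_linear 1 0 0) q)
                      (sphere_pairing f (sphere_linear 0 1 0) q)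
                      (sphere_pairing f (sphere_linear 0 0 1) q) q.
Proof.
  intros Hs; unfold sphere_pairing; rewrite !pd0_sphere_linear, !pd1_sphere_linear.
  unfold sphere_linear.
  pose proof (sin2_cos2 (fst q)) as Ht; pose proof (sin2_cos2 (snd q)) as Hp.
  unfold Rsqr in Ht, Hp.
  set (st := sin (fst q)) in *; set (ct := cos (fst q)) in *;
  set (sp := sin (snd q)) in *; set (cp := cos (snd q)) in *.
  transitivity (f q * (st * st * (sp * sp + cp * cp) + ct * ct)
     + pd 0 f q * (ct * st * (sp * sp + cp * cp) - st * ct)).
  - rewrite Hp, Rmult_1_r, Ht; ring.
  - field; auto.
Qed.

(* Functions with vanishing partial derivatives on a connected open set. *)

Definition stationary_on (U : pt -> Prop) (f : pt -> R) : Prop :=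
  forall q, U q ->
    is_derive (fun t => f (t, snd q)) (fst q) 0 /\
    is_derive (fun t => f (fst q, t)) (snd q) 0.

Lemma segment_const (g : R -> R) (a b : R) :
  (forall t, Rmin a b <= t <= Rmax a b -> is_derive g t 0) -> g a = g b.
Proof.
  intros Hg; unfold Rmin, Rmax in Hg.
  destruct (Rle_dec a b) as [Hab|Hab]; [destruct (Req_dec a b) as [->|Hne]|]; auto.
  - apply eq_is_derive; [intros t Ht; apply Hg; exact Ht | lra].
  - symmetry; apply eq_is_derive; [intros t Ht; apply Hg; exact Ht | lra].
Qed.

Lemma ball_between (a b t e : R) :
  ball a e b -> Rmin a b <= t <= Rmax a b -> ball a e t.
Proof.
  unfold ball; simpl; unfold AbsRing_ball, abs, minus, plus, opp; simpl.
  unfold Rmin, Rmax; destruct (Rle_dec a b); intros; split_Rabs; lra.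
Qed.

(* Moving first in phi, then in theta, within a square around r. *)
Lemma stationary_locally_const (U : pt -> Prop) (f : pt -> R) (r : pt) :
  open U -> stationary_on U f -> U r -> locally r (fun q => f q = f r).
Proof.
  intros HU Hf Hr; destruct (HU r Hr) as [e He]; exists e.
  intros [q1 q2] [B1 B2]; destruct r as [r1 r2]; simpl in B1, B2.
  transitivity (f (q1, r2)).
  - symmetry; apply (segment_const (fun t => f (q1, t))); intros t Ht.
    apply (Hf (q1, t)), He; split; [exact B1 | exact (ball_between _ _ _ _ B2 Ht)].
  - apply (segment_const (fun t => f (t, r2))); intros t Ht.
    apply (Hf (t, r2)), He; split; [| apply ball_center].
    apply (ball_between r1 q1); [exact B1 |].
    rewrite Rmin_comm, Rmax_comm; exact Ht.
Qed.

(* The level set through p and its complement are open, so connectedness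
   forbids the complement to meet U. *)
Lemma stationary_const (U : pt -> Prop) (f : pt -> R) (p q : pt) :
  open U -> connected_set U -> stationary_on U f -> U p -> U q -> f q = f p.
Proof.
  intros HU HC Hf Hp Hq.
  destruct (Req_dec (f q) (f p)) as [E|E]; [exact E | exfalso].
  destruct (HC (fun r => U r /\ f r = f p) (fun r => U r /\ f r <> f p))
    as [r [_ [[_ Er] [_ Nr]]]]; [| | | exists p; auto | exists q; auto | contradiction].
  - intros r [Ur Er]; apply filter_and; [exact (HU r Ur) |].
    eapply filter_imp; [| exact (stationary_locally_const U f r HU Hf Ur)].
    intros s Es; congruence.
  - intros r [Ur Er]; apply filter_and; [exact (HU r Ur) |].
    eapply filter_imp; [| exact (stationary_locally_const U f r HU Hf Ur)].
    intros s Es; congruence.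
  - intros r Ur; destruct (Req_dec (f r) (f p)); [left | right]; auto.
Qed.

Lemma hessian_solutions_linear (U : pt -> Prop) (F : pt -> R) :
  open U -> connected_set U ->
  (forall p, U p -> sin (fst p) <> 0) ->
  (forall p, U p -> ex_pd2 F p) ->
  (forall p, U p -> sphere_hessian F p) ->
  exists a b c, forall p, U p -> F p = sphere_linear a b c p.
Proof.
  intros HU HC Hs HF HessF.
  destruct (classic (exists p0, U p0)) as [[p0 Hp0] | Hempty];
    [| exists 0, 0, 0; intros p Hp; exfalso; eauto].
  assert (Hconst : forall a b c p, U p ->
    sphere_pairing F (sphere_linear a b c) p = sphere_pairing F (sphere_linear a b c) p0).
  { intros a b c p Hp; apply (stationary_const U); try assumption.
    intros q Hq; destruct q as [x y]; apply sphere_pairing_stationary;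
      [exact (Hs _ Hq) | exact (HF _ Hq) | apply sphere_linear_ex_pd2
      | exact (HessF _ Hq) | apply sphere_linear_hessian, (Hs _ Hq)]. }
  exists (sphere_pairing F (sphere_linear 1 0 0) p0),
         (sphere_pairing F (sphere_linear 0 1 0) p0),
         (sphere_pairing F (sphere_linear 0 0 1) p0).
  intros p Hp; rewrite (sphere_linear_reconstruction F p (Hs p Hp)).
  rewrite (Hconst 1 0 0 p Hp), (Hconst 0 1 0 p Hp), (Hconst 0 0 1 p Hp); reflexivity.
Qed.

Lemma harmonic_polar_form (a b : R) :
  exists A phi0, forall y, a * cos y + b * sin y = A * sin (y + phi0).
Proof.
  destruct (Req_dec b 0) as [-> | Hb].
  - exists a, (PI / 2); intros y; rewrite sin_plus, cos_PI2, sin_PI2; ring.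
  - exists (b * sqrt (1 + (a / b)²)), (atan (a / b)); intros y.
    rewrite sin_plus, cos_atan, sin_atan.
    assert (0 < sqrt (1 + (a / b)²))
      by (apply sqrt_lt_R0; pose proof (Rle_0_sqr (a / b)); lra).
    field; split; lra.
Qed.

Theorem mainTheorem15 (lam : R) (U : pt -> Prop) (X : vfield2) (F : pt -> R) :
  0 < lam ->
  open U -> connected_set U ->
  (forall p, U p -> 0 < fst p < PI) ->
  (forall k, (k <= 1)%nat -> smooth_on U (X k)) ->
  smooth_on U F ->
  (forall p, U p -> F p <> 0) ->
  (* X^flat = -2 dF / F *)
  (forall i p, (i <= 1)%nat -> U p ->
     flat (round_metric lam) X i p = -2 * pd i F p / F p) ->
  (* Ric(g) = 1/2 X^flat (x) X^flat - 1/2 L_X g + lam g *)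
  (forall i j p, (i <= 1)%nat -> (j <= 1)%nat -> U p ->
     ricci (round_metric lam) i j p =
       / 2 * (flat (round_metric lam) X i p * flat (round_metric lam) X j p)
       - / 2 * lie_metric (round_metric lam) X i j p
       + lam * round_metric lam i j p) ->
  (exists a b phi0 : R,
     forall p, U p ->
       F p = a * sin (snd p + phi0) * sin (fst p) + b * cos (fst p))
  /\ ~ (forall th ph, 0 < th < PI -> U (th, ph)).
Proof.
  intros Hlam HU HC Hth _ HF HF0 Hflat Hric.
  assert (Hsin : forall p, U p -> sin (fst p) <> 0)
    by (intros p Hp; destruct (Hth p Hp); apply Rgt_not_eq, sin_gt_0; assumption).
  destruct (hessian_solutions_linear U F HU HC Hsin
              (fun p Hp => smooth_ex_pd2 U F p HF Hp)
              (soliton_hessian lam U X F Hlam HU Hth HF HF0 Hflat Hric))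
    as [a [b [c Hlin]]].
  destruct (harmonic_polar_form a b) as [A [phi0 Hpol]].
  assert (HF_form : forall p, U p ->
    F p = A * sin (snd p + phi0) * sin (fst p) + c * cos (fst p)).
  { intros p Hp; rewrite Hlin by exact Hp; unfold sphere_linear; rewrite Hpol; ring. }
  split; [exists A, c, phi0; exact HF_form |].
  (* F vanishes on the equator at phi = - phi0, so U cannot contain that point. *)
  intros Hall; pose proof PI2_3_2 as HPI.
  assert (Hequator : U (PI / 2, - phi0)) by (apply Hall; lra).
  apply (HF0 _ Hequator); rewrite (HF_form _ Hequator); cbn [fst snd].
  replace (- phi0 + phi0) with 0 by ring; rewrite sin_0, cos_PI2; ring.
Qed.
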